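(* In the setting of the context, for every fixed $j\ge0$, $$\pi_{i,j}\sim\frac{C^j\pi_{0,0}}{j!}\,i^{j}r_0^{\,i}\qquad\text{as } i\to\infty,$$ where $$C=\frac{q}{\bar q}\cdot\frac{\bar p\mu_hr_0^2+(p\mu_h+\bar p\bar\mu_h)r_0+p\bar\mu_h}{p\bar\mu_h-\bar p\mu_hr_0^2}.$$
   Context: Fix $p,q,\mu_h,\mu_l\in(0,1)$ with $p+q+\mu_h+\mu_l=1$ and $\mu_l\le\mu_h$. For real $x$ write $\bar x=1-x$; let $\rho=p/\mu_h+q/\mu_l$ and assume $\rho<1$. Let $(Q_1(n),Q_2(n))_{n\ge0}$ be the discrete-time Markov chain on $\mathbb{Z}_{\ge0}^2$ (numbers of high- and low-priority customers in a discrete-time preemptive priority queue, early arrival system) whose one-step transition probabilities from $(i,j)$ to $(i+k,j+l)$ are as follows (unlisted transitions have probability $0$). If $i\ge1$, $j\ge0$: $(k,l)=(1,0)$: $p\bar q\bar\mu_h$; $(1,1)$: $pq\bar\mu_h$; $(0,1)$: $pq\mu_h+\bar pq\bar\mu_h$; $(-1,1)$: $\bar pq\mu_h$; $(-1,0)$: $\bar p\bar q\mu_h$; $(0,0)$: $\bar p\bar q\bar\mu_h+p\bar q\mu_h$. If $i=0$, $j\ge1$: $(1,0)$: $p\bar q\bar\mu_h$; $(1,1)$: $pq\bar\mu_h$; $(0,1)$: $pq\mu_h+\bar pq\bar\mu_l$; $(0,-1)$: $\bar p\bar q\mu_l$; $(0,0)$: $\bar p\bar q\bar\mu_l+p\bar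 q\mu_h+\bar pq\mu_l$. If $(i,j)=(0,0)$: $(1,0)$: $p\bar q\bar\mu_h$; $(1,1)$: $pq\bar\mu_h$; $(0,1)$: $pq\mu_h+\bar pq\bar\mu_l$; $(0,0)$: $\bar p\bar q+p\bar q\mu_h+\bar pq\mu_l$. Let $(\pi_{i,j})_{i,j\ge0}$ be its stationary distribution; $f(n)\sim g(n)$ means $f(n)/g(n)\to1$. Let $r_0=1/x_1(0)$, where $x_1(0)=\frac{1-(p\mu_h+\bar p\bar\mu_h)\bar q+\sqrt{\Delta(0)}}{2p\bar\mu_h\bar q}$ with $\Delta(0)=(p\mu_h-\bar p\bar\mu_h)^2\bar q^2-2(p\mu_h+\bar p\bar\mu_h)\bar q+1>0$ and the positive square root. *)

From Stdlib Require Import Reals ZArith Bool.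
From Coquelicot Require Import Coquelicot.
Open Scope R_scope.

Definition bar (x : R) : R := 1 - x.

Definition isd (k l a b : Z) : bool := Z.eqb k a && Z.eqb l b.

(* One-step transition probability of the chain from (i,j) to (i',j')
   (high-priority count i, low-priority count j), exactly as listed in the
   paper; every unlisted transition has probability 0. *)
Definition trans (p q mh ml : R) (i j i' j' : nat) : R :=
  let k := (Z.of_nat i' - Z.of_nat i)%Z in
  let l := (Z.of_nat j' - Z.of_nat j)%Z in
  if (1 <=? i)%nat then
    if isd k l 1 0 then p * bar q * bar mh
    else if isd k l 1 1 then p * q * bar mh
    else if isd k l 0 1 then p * q * mh + bar p * q * bar mh
    else if isd k l (-1) 1 then bar p * q * mh
    else if isd k l (-1) 0 then bar p * bar q * mh
    else if isd k l 0 0 then bar p * bar q * bar mh + p * bar q * mh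
    else 0
  else if (1 <=? j)%nat then
    if isd k l 1 0 then p * bar q * bar mh
    else if isd k l 1 1 then p * q * bar mh
    else if isd k l 0 1 then p * q * mh + bar p * q * bar ml
    else if isd k l 0 (-1) then bar p * bar q * ml
    else if isd k l 0 0 then bar p * bar q * bar ml + p * bar q * mh + bar p * q * ml
    else 0
  else
    if isd k l 1 0 then p * bar q * bar mh
    else if isd k l 1 1 then p * q * bar mh
    else if isd k l 0 1 then p * q * mh + bar p * q * bar ml
    else if isd k l 0 0 then bar p * bar q + p * bar q * mh + bar p * q * ml
    else 0.

(* Since all jumps have coordinates changing by
   at most 1, every x with P(x,(i,j)) <> 0 lies in the box [0,i+1]x[0,j+1],
   so the sum over all x equals the finite sum over that box. The total mass
   of a nonnegative array equals the limit of its square partial sums. *)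
Definition stationary (p q mh ml : R) (pi : nat -> nat -> R) : Prop :=
  (forall i j, 0 <= pi i j) /\
  is_lim_seq (fun N => sum_f_R0 (fun i => sum_f_R0 (fun j => pi i j) N) N) 1 /\
  (forall i j, pi i j =
     sum_f_R0 (fun a => sum_f_R0 (fun b => pi a b * trans p q mh ml a b i j)
                                 (S j)) (S i)).

Definition Delta0 (p q mh : R) : R :=
  (p * mh - bar p * bar mh) ^ 2 * bar q ^ 2 - 2 * (p * mh + bar p * bar mh) * bar q + 1.

Definition x10 (p q mh : R) : R :=
  (1 - (p * mh + bar p * bar mh) * bar q + sqrt (Delta0 p q mh))
  / (2 * p * bar mh * bar q).

Definition r0 (p q mh : R) : R := 1 / x10 p q mh.

Definition Cconst (p q mh : R) : R :=
  let r := r0 p q mh in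
  (q / bar q) *
  ((bar p * mh * r ^ 2 + (p * mh + bar p * bar mh) * r + p * bar mh)
   / (p * bar mh - bar p * mh * r ^ 2)).

From Stdlib Require Import Reals Lra Lia ZArith.
From Coquelicot Require Import Coquelicot.
Open Scope R_scope.

(* For fixed j, the balance equations at the states (i+1, j) form a second-order linear
   recurrence in i,
     pi(i+1,j) = P10 pi(i,j) + P00 pi(i+1,j) + Pm10 pi(i+2,j) + g_j(i),
   whose inhomogeneity g_j only involves column j-1 (and g_0 = 0). Its characteristic
   equation has the roots r0 < 1 and P10/(Pm10 r0) > 1/r0; as pi is bounded, only the
   r0-mode survives. In terms of y_i = pi(i,j)/r0^i, the differences d_i = y_(i+1) - y_i
   satisfy d_(i+1) = rho d_i - e_i with rho = P10/(Pm10 r0^2) > 1, and boundedness forces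
   d_i = o(rho^i). For j = 0 this makes y constant, i.e. pi(i,0) = pi(0,0) r0^i. If
   y_i ~ K i^j in column j, then e_i ~ E i^j in column j+1, Stolz-Cesaro gives
   d_i ~ E i^j/(rho - 1), and summing, y_i ~ E i^(j+1)/((j+1)(rho - 1)) = K C i^(j+1)/(j+1). *)

Lemma is_lim_seq_inv_INR_plus (t : R) :
  0 < t -> is_lim_seq (fun n => / (INR n + t)) 0.
Proof.
  intros Ht.
  assert (Hinf : is_lim_seq (fun n => INR n + t) p_infty).
  { eapply is_lim_seq_plus; [apply is_lim_seq_INR | apply is_lim_seq_const | reflexivity]. }
  apply (is_lim_seq_inv _ _ Hinf). discriminate.
Qed.

Lemma is_lim_seq_pow (u : nat -> R) (l : R) (m : nat) :
  is_lim_seq u l -> is_lim_seq (fun n => u n ^ m) (l ^ m).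
Proof.
  intros Hu. induction m as [|m IH]; simpl.
  - apply is_lim_seq_const.
  - apply is_lim_seq_mult'; assumption.
Qed.

Lemma is_lim_seq_pow_ratio_INR_plus (s t : R) (m : nat) :
  0 < t -> is_lim_seq (fun n => (INR n + s) ^ m / (INR n + t) ^ m) 1.
Proof.
  intros Ht.
  assert (Hratio : is_lim_seq (fun n => (INR n + s) / (INR n + t)) 1).
  { assert (H := is_lim_seq_plus' _ _ 1 _ (is_lim_seq_const 1)
                   (is_lim_seq_scal_l _ (s - t) _ (is_lim_seq_inv_INR_plus t Ht))).
    simpl in H. rewrite Rmult_0_r, Rplus_0_r in H.
    eapply is_lim_seq_ext; [|exact H]. intros n.
    assert (0 <= INR n) by apply pos_INR. cbv beta. field. lra. }
  rewrite <- (pow1 m).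
  eapply is_lim_seq_ext; [|exact (is_lim_seq_pow _ _ m Hratio)]. intros n.
  unfold Rdiv. rewrite Rpow_mult_distr, pow_inv. reflexivity.
Qed.

Lemma is_lim_seq_shift_div_pow (v : nat -> R) (m k : nat) (K : R) :
  is_lim_seq (fun n => v n / INR n ^ m) K ->
  is_lim_seq (fun n => v (n + k)%nat / (INR n + 1) ^ m) K.
Proof.
  intros Hv. apply (is_lim_seq_incr_n _ k) in Hv.
  assert (H := is_lim_seq_mult' _ _ _ _ Hv
                 (is_lim_seq_pow_ratio_INR_plus (INR k) 1 m Rlt_0_1)).
  rewrite Rmult_1_r in H. eapply is_lim_seq_ext_loc; [|exact H].
  exists 1%nat. intros n Hn.
  assert (0 < INR n) by (apply lt_0_INR; lia).
  assert (0 <= INR k) by apply pos_INR.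
  assert (0 < (INR n + INR k) ^ m) by (apply pow_lt; lra).
  assert (0 < (INR n + 1) ^ m) by (apply pow_lt; lra).
  rewrite plus_INR. field. lra.
Qed.

Lemma is_lim_seq_0_of_ratio_lt_1 (u : nat -> R) (k : R) :
  k < 1 -> (forall n, 0 < u n) -> is_lim_seq (fun n => u (S n) / u n) k ->
  is_lim_seq u 0.
Proof.
  intros Hk Hu Hratio.
  assert (Habs : forall n, Rabs (u n) = u n) by (intros n; apply Rabs_right, Rle_ge, Rlt_le, Hu).
  assert (Hser : ex_series (fun n => Rabs (u n))).
  { apply (ex_series_DAlembert u k Hk); [intros n; specialize (Hu n); lra|].
    eapply is_lim_seq_ext; [|exact Hratio]. intros n.
    rewrite Rabs_right; [reflexivity|].
    apply Rle_ge, Rlt_le, Rdiv_lt_0_compat; apply Hu. }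
  apply ex_series_lim_0 in Hser.
  eapply is_lim_seq_ext; [|exact Hser]. intros n. apply Habs.
Qed.

Lemma is_lim_seq_poly_div_geom (rho : R) (m : nat) :
  1 < rho -> is_lim_seq (fun n => (INR n + 1) ^ m / rho ^ n) 0.
Proof.
  intros Hrho.
  apply (is_lim_seq_0_of_ratio_lt_1 _ (/ rho)).
  - rewrite <- Rinv_1. apply Rinv_lt_contravar; lra.
  - intros n. apply Rdiv_lt_0_compat; apply pow_lt; [|lra].
    assert (0 <= INR n) by apply pos_INR. lra.
  - rewrite <- (Rmult_1_l (/ rho)).
    eapply is_lim_seq_ext; [|exact (is_lim_seq_scal_r _ (/ rho) _
                                      (is_lim_seq_pow_ratio_INR_plus 2 1 m Rlt_0_1))].
    intros n. cbv beta. rewrite S_INR.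
    assert (0 <= INR n) by apply pos_INR.
    assert (0 < (INR n + 1) ^ m) by (apply pow_lt; lra).
    assert (0 < rho ^ n) by (apply pow_lt; lra).
    replace (INR n + 1 + 1) with (INR n + 2) by ring.
    change (rho ^ S n) with (rho * rho ^ n). field. lra.
Qed.

Lemma eventually_pow_INR_plus_2_lt (rho : R) (m : nat) :
  1 < rho -> exists N, forall n, (N <= n)%nat ->
    (INR n + 2) ^ m < rho * (INR n + 1) ^ m.
Proof.
  intros Hrho.
  assert (H := is_lim_seq_pow_ratio_INR_plus 2 1 m Rlt_0_1).
  rewrite is_lim_seq_Reals in H. destruct (H (rho - 1)) as [N HN]; [lra|].
  exists N. intros n Hn. specialize (HN n Hn). unfold R_dist in HN.
  apply Rabs_def2 in HN.
  assert (0 < (INR n + 1) ^ m) by (apply pow_lt; assert (0 <= INR n) by apply pos_INR; lra).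
  apply (Rmult_lt_reg_r (/ (INR n + 1) ^ m)); [apply Rinv_0_lt_compat; assumption|].
  rewrite Rmult_assoc, Rinv_r by lra. lra.
Qed.

Lemma is_lim_seq_tail (u : nat -> R) (l : R) (n : nat) :
  is_lim_seq u l -> is_lim_seq (fun k => u (n + k)%nat) l.
Proof.
  intros Hu. apply (is_lim_seq_incr_n _ n) in Hu.
  eapply is_lim_seq_ext; [|exact Hu]. intros k. now rewrite Nat.add_comm.
Qed.

Lemma stolz_cesaro_0_0 (A B : nat -> R) (L : R) (N0 : nat) :
  is_lim_seq A 0 -> is_lim_seq B 0 ->
  (forall n, (N0 <= n)%nat -> B (S n) < B n) ->
  is_lim_seq (fun n => (A (S n) - A n) / (B (S n) - B n)) L ->
  is_lim_seq (fun n => A n / B n) L.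
Proof.
  intros HA HB Hdec HR.
  assert (Hmono : forall n k, (N0 <= n)%nat -> B (n + k)%nat <= B n).
  { intros n k Hn. induction k as [|k IH].
    - rewrite Nat.add_0_r. lra.
    - rewrite Nat.add_succ_r. specialize (Hdec (n + k)%nat ltac:(lia)). lra. }
  assert (Hpos : forall n, (N0 <= n)%nat -> 0 < B n).
  { intros n Hn.
    assert (Hle : Rbar_le 0 (B (S n))).
    { apply (is_lim_seq_le (fun k => B (S n + k)%nat) (fun _ => B (S n))).
      - intros k. apply Hmono. lia.
      - apply is_lim_seq_tail, HB.
      - apply is_lim_seq_const. }
    simpl in Hle. specialize (Hdec n Hn). lra. }
  apply is_lim_seq_Reals. intros eps Heps.
  rewrite is_lim_seq_Reals in HR. destruct (HR (eps / 2)) as [N1 HN1]; [lra|].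
  exists (max N0 N1). intros n Hn. unfold R_dist.
  assert (HBn : 0 < B n) by (apply Hpos; lia).
  assert (Hchain : forall k, Rabs (A (n + k)%nat - A n - L * (B (n + k)%nat - B n))
                             <= eps / 2 * (B n - B (n + k)%nat)).
  { induction k as [|k IH].
    - rewrite Nat.add_0_r, !Rminus_diag, Rmult_0_r, Rminus_0_r, Rabs_R0. lra.
    - rewrite Nat.add_succ_r. set (i := (n + k)%nat) in *.
      specialize (HN1 i ltac:(lia)). specialize (Hdec i ltac:(lia)). unfold R_dist in HN1.
      assert (Hi : Rabs (A (S i) - A i - L * (B (S i) - B i)) <= eps / 2 * (B i - B (S i))).
      { replace (A (S i) - A i - L * (B (S i) - B i))
          with (((A (S i) - A i) / (B (S i) - B i) - L) * (B (S i) - B i)) by (field; lra).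
        rewrite Rabs_mult, (Rabs_left (B (S i) - B i)) by lra.
        replace (eps / 2 * (B i - B (S i))) with (eps / 2 * - (B (S i) - B i)) by ring.
        apply Rmult_le_compat_r; lra. }
      replace (A (S i) - A n - L * (B (S i) - B n))
        with ((A (S i) - A i - L * (B (S i) - B i)) + (A i - A n - L * (B i - B n))) by ring.
      eapply Rle_trans; [apply Rabs_triang|]. lra. }
  assert (Hlim : Rabs (A n - L * B n) <= eps / 2 * B n).
  { assert (Hl := is_lim_seq_le _ _ _ _ Hchain
      (is_lim_seq_abs _ _ (is_lim_seq_minus' _ _ _ _
         (is_lim_seq_minus' _ _ _ _ (is_lim_seq_tail _ _ n HA) (is_lim_seq_const (A n)))
         (is_lim_seq_mult' (fun _ => L) _ _ _ (is_lim_seq_const L)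
            (is_lim_seq_minus' _ _ _ _ (is_lim_seq_tail _ _ n HB) (is_lim_seq_const (B n))))))
      (is_lim_seq_mult' (fun _ => eps / 2) _ _ _ (is_lim_seq_const (eps / 2))
         (is_lim_seq_minus' _ _ _ _ (is_lim_seq_const (B n)) (is_lim_seq_tail _ _ n HB)))).
    simpl in Hl.
    replace (0 - A n - L * (0 - B n)) with (- (A n - L * B n)) in Hl by ring.
    rewrite Rabs_Ropp, Rminus_0_r in Hl. exact Hl. }
  replace (A n / B n - L) with ((A n - L * B n) / B n) by (field; lra).
  unfold Rdiv. rewrite Rabs_mult, Rabs_inv, (Rabs_right (B n)) by lra.
  apply (Rmult_lt_reg_r (B n)); [exact HBn|].
  rewrite Rmult_assoc, Rinv_l by lra. nra.
Qed.

Lemma sum_f_R0_telescope (f : nat -> R) (n : nat) :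
  sum_f_R0 (fun k => f (S k) - f k) n = f (S n) - f O.
Proof. induction n as [|n IH]; simpl; [|rewrite IH]; ring. Qed.

Definition pow_succ_diff (m : nat) (x : R) : R := (x + 1) ^ S m - x ^ S m.

Lemma pow_succ_diff_succ (m : nat) (x : R) :
  pow_succ_diff (S m) x = (x + 1) ^ S m + x * pow_succ_diff m x.
Proof. unfold pow_succ_diff. simpl. ring. Qed.

Lemma pow_succ_diff_pos (m : nat) (x : R) : 0 <= x -> 0 < pow_succ_diff m x.
Proof.
  intros Hx. induction m as [|m IH].
  - unfold pow_succ_diff. simpl. lra.
  - rewrite pow_succ_diff_succ. assert (0 < (x + 1) ^ S m) by (apply pow_lt; lra). nra.
Qed.

Lemma is_lim_seq_pow_succ_diff (m : nat) :
  is_lim_seq (fun i => pow_succ_diff m (INR i) / (INR i + 1) ^ m) (INR (S m)).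
Proof.
  induction m as [|m IH].
  - eapply is_lim_seq_ext; [|apply is_lim_seq_const].
    intros n. unfold pow_succ_diff. simpl. field.
  - assert (H := is_lim_seq_plus' _ _ _ _ (is_lim_seq_const 1)
                   (is_lim_seq_mult' _ _ _ _ (is_lim_seq_pow_ratio_INR_plus 0 1 1 Rlt_0_1) IH)).
    replace (INR (S (S m))) with (1 + 1 * INR (S m)) by (rewrite (S_INR (S m)); ring).
    eapply is_lim_seq_ext; [|exact H]. intros n. cbv beta.
    rewrite pow_succ_diff_succ. assert (0 <= INR n) by apply pos_INR.
    assert (0 < (INR n + 1) ^ m) by (apply pow_lt; lra).
    simpl. field. lra.
Qed.

(* Weighted Cesaro ([Cesaro]) with the weights [(k+1)^(m+1) - k^(m+1)], whose partial sums
   are [(n+1)^(m+1)]. *)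
Lemma is_lim_seq_div_pow_of_increments (u d : nat -> R) (m : nat) (D : R) :
  (forall i, u (S i) = u i + d i) ->
  is_lim_seq (fun i => d i / (INR i + 1) ^ m) D ->
  is_lim_seq (fun n => u n / INR n ^ S m) (D / INR (S m)).
Proof.
  intros Hu Hd.
  set (w := fun k => pow_succ_diff m (INR k)).
  assert (Hw : forall k, 0 < w k) by (intros k; apply pow_succ_diff_pos, pos_INR).
  assert (Hratio : is_lim_seq (fun k => d k / w k) (D / INR (S m))).
  { eapply is_lim_seq_ext; [|exact (is_lim_seq_div' _ _ _ _ Hd (is_lim_seq_pow_succ_diff m)
                                      ltac:(apply not_0_INR; lia))].
    intros k. specialize (Hw k). assert (0 <= INR k) by apply pos_INR.
    assert (0 < (INR k + 1) ^ m) by (apply pow_lt; lra).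
    unfold w in *. cbv beta. field. lra. }
  assert (Hsum_w : forall n, sum_f_R0 w n = (INR n + 1) ^ S m).
  { intros n. unfold w, pow_succ_diff.
    rewrite (sum_eq _ (fun k => INR (S k) ^ S m - INR k ^ S m)).
    - rewrite (sum_f_R0_telescope (fun k => INR k ^ S m)), S_INR. simpl. ring.
    - intros k _. rewrite S_INR. reflexivity. }
  assert (Hsum_d : forall n, sum_f_R0 (fun k => w k * (d k / w k)) n = u (S n) - u O).
  { intros n. rewrite (sum_eq _ (fun k => u (S k) - u k)); [apply sum_f_R0_telescope|].
    intros k _. rewrite Hu. specialize (Hw k). field. lra. }
  assert (Hinfty : cv_infty (fun n => sum_f_R0 w n)).
  { intros M. destruct (INR_unbounded M) as [N HN]. exists N. intros n Hn.
    rewrite Hsum_w. apply le_INR in Hn.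
    assert (1 <= INR n + 1) by (assert (0 <= INR n) by apply pos_INR; lra).
    assert (INR n + 1 <= (INR n + 1) ^ S m).
    { rewrite <- (pow_1 (INR n + 1)) at 1. apply Rle_pow; [assumption | lia]. }
    lra. }
  rewrite is_lim_seq_Reals in Hratio.
  assert (HC := Cesaro w _ _ Hratio Hw Hinfty). rewrite <- is_lim_seq_Reals in HC.
  assert (H0 : is_lim_seq (fun n => u O * (/ (INR n + 1)) ^ S m) 0).
  { replace 0 with (u O * 0 ^ S m) by (simpl; ring).
    apply is_lim_seq_mult'; [apply is_lim_seq_const|].
    apply is_lim_seq_pow, is_lim_seq_inv_INR_plus. lra. }
  apply is_lim_seq_incr_1.
  assert (H := is_lim_seq_plus' _ _ _ _ HC H0). rewrite Rplus_0_r in H.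
  eapply is_lim_seq_ext; [|exact H]. intros n. cbv beta.
  rewrite Hsum_w, Hsum_d, S_INR, pow_inv.
  assert (0 < (INR n + 1) ^ S m) by (apply pow_lt; assert (0 <= INR n) by apply pos_INR; lra).
  field. lra.
Qed.

Section BoundedSolutions.

Variables a b c r : R.
Hypotheses (Hc : 0 < c) (Hr : 0 < r < 1)
  (Hchar : a + b * r + c * r ^ 2 = r) (Hsmall : c * r < a).
Variables x g : nat -> R.
Hypotheses (Hx : forall i, Rabs (x i) <= 1)
  (Hrec : forall i, x (S i) = a * x i + b * x (S i) + c * x (S (S i)) + g i).

(* [rho] is the ratio of the characteristic roots [a / (c r)] and [r]; [c r < a] makes it
   exceed [1 / r]. *)
Let rho := a / (c * r ^ 2).
Let y (n : nat) := x n / r ^ n.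
Let d (n : nat) := y (S n) - y n.
Let e (n : nat) := g n / (c * r ^ S (S n)).

Lemma rho_r_gt_1 : 1 < rho * r.
Proof.
  unfold rho. replace (a / (c * r ^ 2) * r) with (a / (c * r)) by (field; lra).
  apply (Rmult_lt_reg_r (c * r)); [nra|]. field_simplify; lra.
Qed.

Lemma rho_gt_1 : 1 < rho.
Proof. assert (H := rho_r_gt_1). nra. Qed.

Lemma diff_rec (n : nat) : d (S n) = rho * d n - e n.
Proof.
  assert (Hrn : 0 < r ^ n) by (apply pow_lt; lra).
  assert (Hxn : x (S (S n)) = ((1 - b) * x (S n) - a * x n - g n) / c).
  { replace (x (S (S n))) with (c * x (S (S n)) / c) by (field; lra).
    f_equal. pose proof (Hrec n). lra. }
  assert (Hb : b = (r - a - c * r ^ 2) / r).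
  { apply (Rmult_eq_reg_r r); [|lra]. unfold Rdiv. rewrite Rmult_assoc, Rinv_l by lra. lra. }
  unfold d, y, e, rho. rewrite Hxn, Hb. simpl. field. lra.
Qed.

Lemma diff_bound (n : nat) : Rabs (d n) <= 2 / r ^ S n.
Proof.
  assert (Hrn : 0 < r ^ n) by (apply pow_lt; lra).
  assert (HrSn : 0 < r ^ S n) by (apply pow_lt; lra).
  assert (Hle : r ^ S n <= r ^ n) by (simpl; nra).
  assert (Hy : forall k, Rabs (y k) <= / r ^ k).
  { intros k. unfold y, Rdiv. assert (0 < r ^ k) by (apply pow_lt; lra).
    rewrite Rabs_mult, Rabs_inv, (Rabs_right (r ^ k)) by lra.
    rewrite <- (Rmult_1_l (/ r ^ k)) at 2.
    apply Rmult_le_compat_r; [left; apply Rinv_0_lt_compat; lra | apply Hx]. }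
  assert (Hinv : / r ^ n <= / r ^ S n) by (apply Rinv_le_contravar; lra).
  unfold d, Rminus. eapply Rle_trans; [apply Rabs_triang|]. rewrite Rabs_Ropp.
  assert (H1 := Hy (S n)). assert (H2 := Hy n). unfold Rdiv. lra.
Qed.

Lemma is_lim_seq_diff_div_rho_pow : is_lim_seq (fun n => d n / rho ^ n) 0.
Proof.
  assert (Hrho := rho_r_gt_1). set (th := / (rho * r)).
  assert (Hth : 0 < th < 1).
  { unfold th. split; [apply Rinv_0_lt_compat; lra|].
    rewrite <- Rinv_1. apply Rinv_lt_contravar; lra. }
  assert (Hgeom : is_lim_seq (fun n => 2 / r * th ^ n) 0).
  { rewrite <- (Rmult_0_r (2 / r)). apply (is_lim_seq_scal_l _ _ 0).
    apply is_lim_seq_geom. rewrite Rabs_right; lra. }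
  apply is_lim_seq_abs_0.
  apply (is_lim_seq_le_le (fun _ => 0) _ (fun n => 2 / r * th ^ n));
    [|apply is_lim_seq_const | exact Hgeom].
  intros n. split; [apply Rabs_pos|].
  assert (Hrho_n : 0 < rho ^ n) by (apply pow_lt; nra).
  replace (2 / r * th ^ n) with (2 / r ^ S n / rho ^ n).
  - unfold Rdiv at 1 2. rewrite Rabs_mult, Rabs_inv, (Rabs_right (rho ^ n)) by lra.
    apply Rmult_le_compat_r; [left; apply Rinv_0_lt_compat; lra | apply diff_bound].
  - unfold th. rewrite pow_inv, Rpow_mult_distr. simpl.
    field. repeat split; try apply pow_nonzero; nra.
Qed.

Lemma bounded_solution_homogeneous : (forall i, g i = 0) -> forall n, x n = x O * r ^ n.
Proof.
  intros Hg.
  assert (Hrho := rho_gt_1).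
  assert (Hd : forall n, d n = rho ^ n * d O).
  { induction n as [|n IH]; [simpl; ring|].
    rewrite diff_rec, IH. unfold e. rewrite Hg. unfold Rdiv. simpl. ring. }
  assert (Hd0 : d O = 0).
  { assert (Hconst : is_lim_seq (fun n => d n / rho ^ n) (d O)).
    { eapply is_lim_seq_ext; [|apply is_lim_seq_const]. intros n. cbv beta.
      rewrite (Hd n). field. apply pow_nonzero. lra. }
    apply is_lim_seq_unique in Hconst.
    rewrite (is_lim_seq_unique _ _ is_lim_seq_diff_div_rho_pow) in Hconst.
    now injection Hconst. }
  assert (Hy : forall n, y n = x O).
  { induction n as [|n IH]; [unfold y; simpl; field|].
    assert (d n = 0) by (rewrite Hd, Hd0; ring). unfold d in *. lra. }
  intros n. specialize (Hy n). unfold y in Hy.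
  assert (0 < r ^ n) by (apply pow_lt; lra).
  rewrite <- Hy. field. lra.
Qed.

Lemma bounded_solution_asymptotics (m : nat) (E : R) :
  is_lim_seq (fun n => e n / (INR n + 1) ^ m) E ->
  is_lim_seq (fun n => y n / INR n ^ S m) (E / (rho - 1) / INR (S m)).
Proof.
  intros HE.
  assert (Hrho := rho_gt_1).
  assert (Hrho_n : forall n, 0 < rho ^ n) by (intros n; apply pow_lt; lra).
  assert (Hpoly : forall n, 0 < (INR n + 1) ^ m).
  { intros n. apply pow_lt. assert (0 <= INR n) by apply pos_INR. lra. }
  destruct (eventually_pow_INR_plus_2_lt rho m Hrho) as [N HN].
  set (A := fun n => d n / rho ^ n).
  set (B := fun n => (INR n + 1) ^ m / rho ^ n).
  assert (HB_S : forall n, B (S n) = (INR n + 2) ^ m / (rho * rho ^ n)).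
  { intros n. unfold B. rewrite S_INR. replace (INR n + 1 + 1) with (INR n + 2) by ring.
    reflexivity. }
  assert (Hdec : forall n, (N <= n)%nat -> B (S n) < B n).
  { intros n Hn. specialize (HN n Hn). specialize (Hrho_n n). rewrite HB_S. unfold B.
    apply (Rmult_lt_reg_r (rho * rho ^ n)); [nra|].
    replace ((INR n + 2) ^ m / (rho * rho ^ n) * (rho * rho ^ n)) with ((INR n + 2) ^ m)
      by (field; lra).
    replace ((INR n + 1) ^ m / rho ^ n * (rho * rho ^ n)) with (rho * (INR n + 1) ^ m)
      by (field; lra).
    exact HN. }
  assert (Hratio : is_lim_seq (fun n => (A (S n) - A n) / (B (S n) - B n)) (E / (rho - 1))).
  { assert (H := is_lim_seq_div' _ _ _ _ HE
                   (is_lim_seq_minus' _ _ _ _ (is_lim_seq_const rho)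
                      (is_lim_seq_pow_ratio_INR_plus 2 1 m Rlt_0_1)) ltac:(lra)).
    eapply is_lim_seq_ext_loc; [|exact H]. exists N. intros n Hn.
    specialize (HN n Hn). specialize (Hrho_n n). specialize (Hpoly n).
    rewrite HB_S. unfold A, B. rewrite diff_rec. change (rho ^ S n) with (rho * rho ^ n).
    field. repeat split; nra. }
  assert (Hd : is_lim_seq (fun n => d n / (INR n + 1) ^ m) (E / (rho - 1))).
  { eapply is_lim_seq_ext;
      [|exact (stolz_cesaro_0_0 A B _ N is_lim_seq_diff_div_rho_pow
                 (is_lim_seq_poly_div_geom rho m Hrho) Hdec Hratio)].
    intros n. specialize (Hrho_n n). specialize (Hpoly n). unfold A, B.
    field. lra. }
  apply (is_lim_seq_div_pow_of_increments y d); [intros i; unfold d; ring | exact Hd].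
Qed.

End BoundedSolutions.

(* [Pkl] is the probability of the jump [(k, l)] out of a state [(i, j)] with [i >= 1]
   ([m] stands for [-1]); the jumps [(1, 0)] and [(1, 1)] have the same probabilities
   at [i = 0]. *)
Definition P10 (p q mh : R) : R := p * bar q * bar mh.
Definition P00 (p q mh : R) : R := bar p * bar q * bar mh + p * bar q * mh.
Definition Pm10 (p q mh : R) : R := bar p * bar q * mh.
Definition P11 (p q mh : R) : R := p * q * bar mh.
Definition P01 (p q mh : R) : R := p * q * mh + bar p * q * bar mh.
Definition Pm11 (p q mh : R) : R := bar p * q * mh.

Lemma P10_pos (p q mh : R) : 0 < p < 1 -> 0 < q < 1 -> 0 < mh < 1 -> 0 < P10 p q mh.
Proof. intros. unfold P10, bar. repeat apply Rmult_lt_0_compat; lra. Qed.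

Lemma Pm10_pos (p q mh : R) : 0 < p < 1 -> 0 < q < 1 -> 0 < mh < 1 -> 0 < Pm10 p q mh.
Proof. intros. unfold Pm10, bar. repeat apply Rmult_lt_0_compat; lra. Qed.

Ltac case_trans_tests :=
  unfold trans, isd; rewrite ?Nat2Z.inj_succ;
  repeat match goal with
  | |- context [Z.eqb ?x ?y] => destruct (Z.eqb_spec x y)
  | |- context [Nat.leb ?x ?y] => destruct (Nat.leb_spec x y)
  end; simpl; try lia; try reflexivity.

Section Transitions.

Variables p q mh ml : R.

Lemma trans_P10 (i j : nat) : trans p q mh ml i j (S i) j = P10 p q mh.
Proof. case_trans_tests. Qed.

Lemma trans_P00 (i j : nat) : trans p q mh ml (S i) j (S i) j = P00 p q mh.
Proof. case_trans_tests. Qed.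

Lemma trans_Pm10 (i j : nat) : trans p q mh ml (S i) j i j = Pm10 p q mh.
Proof. case_trans_tests. Qed.

Lemma trans_P11 (i j : nat) : trans p q mh ml i j (S i) (S j) = P11 p q mh.
Proof. case_trans_tests. Qed.

Lemma trans_P01 (i j : nat) : trans p q mh ml (S i) j (S i) (S j) = P01 p q mh.
Proof. case_trans_tests. Qed.

Lemma trans_Pm11 (i j : nat) : trans p q mh ml (S (S i)) j (S i) (S j) = Pm11 p q mh.
Proof. case_trans_tests. Qed.

Lemma trans_low_departure_at_0 (j : nat) :
  trans p q mh ml 0 (S j) 0 j = bar p * bar q * ml.
Proof. case_trans_tests. Qed.

Lemma trans_into_high_pos_eq0 (s t i j : nat) :
  ~ ((s = i \/ s = S i \/ s = S (S i)) /\ (t = j \/ S t = j)) ->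
  trans p q mh ml s t (S i) j = 0.
Proof. intros H. case_trans_tests. Qed.

Lemma trans_nonneg (s t i j : nat) :
  0 < p < 1 -> 0 < q < 1 -> 0 < mh < 1 -> 0 < ml < 1 ->
  0 <= trans p q mh ml s t i j.
Proof.
  intros Hp Hq Hmh Hml.
  case_trans_tests; unfold bar;
  repeat match goal with
  | |- 0 <= _ + _ => apply Rplus_le_le_0_compat
  | |- 0 <= _ * _ => apply Rmult_le_pos
  end; lra.
Qed.

End Transitions.

Lemma sum_f_R0_single (f : nat -> R) (k n : nat) :
  (k <= n)%nat -> (forall t, (t <= n)%nat -> t <> k -> f t = 0) -> sum_f_R0 f n = f k.
Proof.
  intros Hk Hf. induction n as [|n IH].
  - replace k with O by lia. reflexivity.
  - simpl. destruct (Nat.eq_dec k (S n)) as [->|Hne].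
    + rewrite sum_eq_R0; [ring|]. intros t Ht. apply Hf; lia.
    + rewrite IH, (Hf (S n)); [ring | lia | lia | lia | intros t Ht; apply Hf; lia].
Qed.

Lemma sum_f_R0_three (f : nat -> R) (i : nat) :
  (forall t, t <> i -> t <> S i -> t <> S (S i) -> f t = 0) ->
  sum_f_R0 f (S (S i)) = f i + f (S i) + f (S (S i)).
Proof.
  intros Hf. simpl. rewrite (sum_f_R0_single f i i); [reflexivity | lia |].
  intros t Ht Hne. apply Hf; lia.
Qed.

Lemma sum_f_R0_term_le (f : nat -> R) (k n : nat) :
  (k <= n)%nat -> (forall t, 0 <= f t) -> f k <= sum_f_R0 f n.
Proof.
  intros Hk Hf. induction n as [|n IH].
  - replace k with O by lia. simpl. lra.
  - simpl. destruct (Nat.eq_dec k (S n)) as [->|Hne].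
    + assert (0 <= sum_f_R0 f n) by (apply cond_pos_sum; assumption). lra.
    + specialize (IH ltac:(lia)). specialize (Hf (S n)). lra.
Qed.

Definition low_arrival_inflow (p q mh : R) (pi : nat -> nat -> R) (i j : nat) : R :=
  match j with
  | O => 0
  | S j' => P11 p q mh * pi i j' + P01 p q mh * pi (S i) j' + Pm11 p q mh * pi (S (S i)) j'
  end.

Section Stationary.

Variables (p q mh ml : R) (pi : nat -> nat -> R).
Hypotheses (Hp : 0 < p < 1) (Hq : 0 < q < 1) (Hmh : 0 < mh < 1) (Hml : 0 < ml < 1).
Hypothesis Hst : stationary p q mh ml pi.

Lemma stationary_nonneg (i j : nat) : 0 <= pi i j.
Proof. apply (proj1 Hst). Qed.

Lemma stationary_balance_high_pos (i j : nat) :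
  pi (S i) j = P10 p q mh * pi i j + P00 p q mh * pi (S i) j + Pm10 p q mh * pi (S (S i)) j
               + low_arrival_inflow p q mh pi i j.
Proof.
  destruct Hst as [_ [_ Hbal]]. rewrite (Hbal (S i) j) at 1.
  set (row := fun s => sum_f_R0 (fun t => pi s t * trans p q mh ml s t (S i) j) (S j)).
  transitivity (sum_f_R0 row (S (S i))); [reflexivity|].
  rewrite sum_f_R0_three.
  2:{ intros s H1 H2 H3. unfold row. apply sum_eq_R0. intros t _.
      rewrite trans_into_high_pos_eq0; [ring | lia]. }
  assert (Hrow : forall s, row s = pi s j * trans p q mh ml s j (S i) j +
      match j with O => 0 | S j' => pi s j' * trans p q mh ml s j' (S i) j end).
  { intros s. unfold row. destruct j as [|j'].
    - simpl. rewrite (trans_into_high_pos_eq0 p q mh ml s 1 i 0); [ring | lia].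
    - rewrite sum_f_R0_three.
      + rewrite (trans_into_high_pos_eq0 p q mh ml s (S (S j')) i (S j')); [ring | lia].
      + intros t H1 H2 H3. rewrite trans_into_high_pos_eq0; [ring | lia]. }
  rewrite !Hrow, trans_P10, trans_P00, trans_Pm10. unfold low_arrival_inflow.
  destruct j as [|j']; [ring|]. rewrite trans_P11, trans_P01, trans_Pm11. ring.
Qed.

Lemma stationary_le_1 (i j : nat) : pi i j <= 1.
Proof.
  destruct Hst as [Hnn [Hmass _]].
  set (SN := fun N => sum_f_R0 (fun i => sum_f_R0 (fun j => pi i j) N) N).
  assert (Hincr : forall N, SN N <= SN (S N)).
  { intros N. unfold SN. rewrite tech5.
    assert (0 <= sum_f_R0 (fun j => pi (S N) j) (S N)) by (apply cond_pos_sum; auto).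
    assert (sum_f_R0 (fun i => sum_f_R0 (fun j => pi i j) N) N <=
            sum_f_R0 (fun i => sum_f_R0 (fun j => pi i j) (S N)) N).
    { apply sum_growing. intros t. rewrite tech5. specialize (Hnn t (S N)). lra. }
    lra. }
  eapply Rle_trans; [|exact (is_lim_seq_incr_compare SN 1 Hmass Hincr (max i j))].
  unfold SN. eapply Rle_trans;
    [|apply (sum_f_R0_term_le _ i); [lia | intros; apply cond_pos_sum; auto]].
  apply (sum_f_R0_term_le (fun j => pi i j)); [lia | auto].
Qed.

Lemma stationary_flow_le (s t i j : nat) :
  (s <= S i)%nat -> (t <= S j)%nat -> pi s t * trans p q mh ml s t i j <= pi i j.
Proof.
  intros Hs Ht. destruct Hst as [Hnn [_ Hbal]]. rewrite (Hbal i j).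
  assert (Hflow : forall s t, 0 <= pi s t * trans p q mh ml s t i j).
  { intros. apply Rmult_le_pos; [auto | apply trans_nonneg; assumption]. }
  eapply Rle_trans;
    [|apply (sum_f_R0_term_le _ s); [auto | intros; apply cond_pos_sum; auto]].
  apply (sum_f_R0_term_le (fun t => pi s t * trans p q mh ml s t i j)); auto.
Qed.

(* Mass 0 at a state forces mass 0 on every state that feeds it; from (0, 0) this spreads
   along (0, j+1) -> (0, j) and (i+1, j) -> (i, j) to all states, against total mass 1. *)
Lemma stationary_empty_pos : 0 < pi O O.
Proof.
  destruct (Rlt_le_dec 0 (pi O O)) as [Hpos|H00]; [exact Hpos|exfalso].
  assert (Hnn := stationary_nonneg).
  assert (Hd0 : 0 < bar p * bar q * ml) by (unfold bar; repeat apply Rmult_lt_0_compat; lra).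
  assert (Hd1 : 0 < Pm10 p q mh) by (apply Pm10_pos; assumption).
  assert (Hcol0 : forall j, pi O j = 0).
  { induction j as [|j IH]; [specialize (Hnn O O); lra|].
    assert (H := stationary_flow_le O (S j) O j ltac:(lia) ltac:(lia)).
    rewrite trans_low_departure_at_0, IH in H. specialize (Hnn O (S j)). nra. }
  assert (Hall : forall i j, pi i j = 0).
  { induction i as [|i IH]; [exact Hcol0|]. intros j.
    assert (H := stationary_flow_le (S i) j i j ltac:(lia) ltac:(lia)).
    rewrite trans_Pm10, IH in H. specialize (Hnn (S i) j). nra. }
  destruct Hst as [_ [Hmass _]].
  assert (Hzero : is_lim_seq (fun N => sum_f_R0 (fun i => sum_f_R0 (fun j => pi i j) N) N) 0).
  { eapply is_lim_seq_ext; [|apply is_lim_seq_const]. intros N. cbv beta.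
    symmetry. apply sum_eq_R0. intros. apply sum_eq_R0. intros. apply Hall. }
  apply is_lim_seq_unique in Hmass, Hzero. rewrite Hmass in Hzero.
  injection Hzero. lra.
Qed.

End Stationary.

(* [r0] is the smaller root of [Pm10 x^2 - (1 - P00) x + P10], in the rationalised form
   [2 P10 / (T + sqrt (T^2 - 4 P10 Pm10))] with [T = 1 - P00 = q + P10 + Pm10]. *)
Lemma r0_spec (p q mh : R) : 0 < p < 1 -> 0 < q < 1 -> 0 < mh < 1 ->
  0 < r0 p q mh < 1 /\
  P10 p q mh + P00 p q mh * r0 p q mh + Pm10 p q mh * r0 p q mh ^ 2 = r0 p q mh /\
  Pm10 p q mh * r0 p q mh < P10 p q mh.
Proof.
  intros Hp Hq Hmh.
  set (a := P10 p q mh). set (c := Pm10 p q mh). set (T := q + a + c).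
  assert (Ha : 0 < a) by (apply P10_pos; assumption).
  assert (Hc : 0 < c) by (apply Pm10_pos; assumption).
  assert (Hb : P00 p q mh = 1 - T) by (unfold T, a, c, P00, P10, Pm10, bar; ring).
  assert (HD : Delta0 p q mh = T ^ 2 - 4 * a * c) by (unfold Delta0, T, a, c, P10, Pm10, bar; ring).
  set (s := sqrt (Delta0 p q mh)).
  assert (Hs0 : 0 <= s) by apply sqrt_pos.
  assert (Hs2 : s * s = T ^ 2 - 4 * a * c).
  { unfold s. rewrite sqrt_sqrt; [exact HD|]. rewrite HD.
    replace (T ^ 2 - 4 * a * c) with (q * q + 2 * q * (a + c) + (a - c) ^ 2) by (unfold T; ring).
    assert (0 <= (a - c) ^ 2) by apply pow2_ge_0. nra. }
  assert (Hr : r0 p q mh = 2 * a / (T + s)).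
  { unfold r0, x10. fold s.
    replace (1 - (p * mh + bar p * bar mh) * bar q) with T
      by (unfold T, a, c, P10, Pm10, bar; ring).
    assert (0 < T) by (unfold T; lra).
    unfold a, P10. field. unfold bar. repeat split; lra. }
  rewrite Hb, Hr.
  assert (Hs_gt1 : a - c - q < s).
  { destruct (Rlt_le_dec (a - c - q) 0); [lra|].
    assert ((a - c - q) ^ 2 < s * s) by (rewrite Hs2; unfold T; nra). nra. }
  assert (Hs_gt2 : c - a - q < s).
  { destruct (Rlt_le_dec (c - a - q) 0); [lra|].
    assert ((c - a - q) ^ 2 < s * s) by (rewrite Hs2; unfold T; nra). nra. }
  assert (Hden : 0 < T + s) by (unfold T; lra).
  repeat split.
  - apply Rdiv_lt_0_compat; lra.
  - apply (Rmult_lt_reg_r (T + s)); [exact Hden|]. field_simplify; unfold T in *; lra.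
  - assert (Hroot : c * (2 * a) ^ 2 - T * (2 * a) * (T + s) + a * (T + s) ^ 2 = 0).
    { replace (c * (2 * a) ^ 2 - T * (2 * a) * (T + s) + a * (T + s) ^ 2)
        with (a * (4 * a * c - T ^ 2 + s * s)) by ring.
      rewrite Hs2. ring. }
    replace (a + (1 - T) * (2 * a / (T + s)) + c * (2 * a / (T + s)) ^ 2)
      with (2 * a / (T + s) + (c * (2 * a) ^ 2 - T * (2 * a) * (T + s) + a * (T + s) ^ 2)
                               / (T + s) ^ 2) by (field; lra).
    rewrite Hroot. unfold Rdiv. ring.
  - apply (Rmult_lt_reg_r (T + s)); [exact Hden|]. field_simplify; unfold T in *; nra.
Qed.

Lemma Pm10_r0_sq_lt_P10 (p q mh : R) : 0 < p < 1 -> 0 < q < 1 -> 0 < mh < 1 ->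
  Pm10 p q mh * r0 p q mh ^ 2 < P10 p q mh.
Proof.
  intros Hp Hq Hmh.
  destruct (r0_spec p q mh Hp Hq Hmh) as [Hr [_ Hsmall]].
  assert (Hc := Pm10_pos p q mh Hp Hq Hmh).
  assert (r0 p q mh ^ 2 < r0 p q mh) by (simpl; nra).
  assert (Pm10 p q mh * r0 p q mh ^ 2 < Pm10 p q mh * r0 p q mh)
    by (apply Rmult_lt_compat_l; lra).
  lra.
Qed.

Lemma Cconst_eq (p q mh : R) : 0 < p < 1 -> 0 < q < 1 -> 0 < mh < 1 ->
  let r := r0 p q mh in
  Cconst p q mh = (P11 p q mh + P01 p q mh * r + Pm11 p q mh * r ^ 2)
                  / (P10 p q mh - Pm10 p q mh * r ^ 2).
Proof.
  intros Hp Hq Hmh r.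
  assert (Hden := Pm10_r0_sq_lt_P10 p q mh Hp Hq Hmh). fold r in Hden.
  assert (Hden' : p * bar mh - bar p * mh * r ^ 2 <> 0).
  { intros H0.
    assert (E : P10 p q mh - Pm10 p q mh * r ^ 2 = bar q * (p * bar mh - bar p * mh * r ^ 2))
      by (unfold P10, Pm10; ring).
    rewrite H0, Rmult_0_r in E. lra. }
  unfold Cconst, P11, P01, Pm11, P10, Pm10. fold r.
  field. unfold P10, Pm10, bar in *. repeat split; lra.
Qed.

Lemma Cconst_pos (p q mh : R) : 0 < p < 1 -> 0 < q < 1 -> 0 < mh < 1 -> 0 < Cconst p q mh.
Proof.
  intros Hp Hq Hmh.
  destruct (r0_spec p q mh Hp Hq Hmh) as [Hr _].
  assert (Hden := Pm10_r0_sq_lt_P10 p q mh Hp Hq Hmh).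
  rewrite (Cconst_eq p q mh Hp Hq Hmh). apply Rdiv_lt_0_compat; [|lra].
  assert (0 < r0 p q mh ^ 2) by (apply pow_lt; lra).
  unfold P11, P01, Pm11, bar.
  assert (0 < p * q * (1 - mh)) by (repeat apply Rmult_lt_0_compat; lra).
  assert (0 < p * q * mh + (1 - p) * q * (1 - mh)) by
    (apply Rplus_lt_0_compat; repeat apply Rmult_lt_0_compat; lra).
  assert (0 < (1 - p) * q * mh) by (repeat apply Rmult_lt_0_compat; lra).
  nra.
Qed.

Section Columns.

Variables (p q mh ml : R) (pi : nat -> nat -> R).
Hypotheses (Hp : 0 < p < 1) (Hq : 0 < q < 1) (Hmh : 0 < mh < 1).
Hypothesis Hst : stationary p q mh ml pi.

Let r := r0 p q mh.

Lemma stationary_abs_le_1 (i j : nat) : Rabs (pi i j) <= 1.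
Proof.
  rewrite Rabs_right;
    [apply (stationary_le_1 p q mh ml) | apply Rle_ge, (stationary_nonneg p q mh ml)];
    assumption.
Qed.

Lemma stationary_column_0 (n : nat) : pi n O = pi O O * r ^ n.
Proof.
  destruct (r0_spec p q mh Hp Hq Hmh) as [Hr [Hchar Hsmall]].
  apply (bounded_solution_homogeneous (P10 p q mh) (P00 p q mh) (Pm10 p q mh) r
           (Pm10_pos p q mh Hp Hq Hmh) Hr Hchar Hsmall
           (fun i => pi i O) (fun i => low_arrival_inflow p q mh pi i O)).
  - intros i. apply stationary_abs_le_1.
  - intros i. apply (stationary_balance_high_pos p q mh ml); assumption.
  - reflexivity.
Qed.

Lemma stationary_column_succ (j : nat) (K : R) :
  is_lim_seq (fun n => pi n j / r ^ n / INR n ^ j) K ->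
  is_lim_seq (fun n => pi n (S j) / r ^ n / INR n ^ S j) (K * Cconst p q mh / INR (S j)).
Proof.
  intros Hj.
  destruct (r0_spec p q mh Hp Hq Hmh) as [Hr [Hchar Hsmall]]. fold r in Hr, Hchar, Hsmall.
  assert (Hc := Pm10_pos p q mh Hp Hq Hmh).
  set (y := fun n => pi n j / r ^ n).
  assert (Hshift : forall k, is_lim_seq (fun n => y (n + k)%nat / (INR n + 1) ^ j) K)
    by (intros k; apply is_lim_seq_shift_div_pow, Hj).
  assert (Hinflow : is_lim_seq
            (fun n => low_arrival_inflow p q mh pi n (S j) / (Pm10 p q mh * r ^ S (S n))
                      / (INR n + 1) ^ j)
            (P11 p q mh / (Pm10 p q mh * r ^ 2) * K + P01 p q mh / (Pm10 p q mh * r) * K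
             + Pm11 p q mh / Pm10 p q mh * K)).
  { assert (H := is_lim_seq_plus' _ _ _ _
      (is_lim_seq_plus' _ _ _ _
         (is_lim_seq_scal_l _ (P11 p q mh / (Pm10 p q mh * r ^ 2)) _ (Hshift 0%nat))
         (is_lim_seq_scal_l _ (P01 p q mh / (Pm10 p q mh * r)) _ (Hshift 1%nat)))
      (is_lim_seq_scal_l _ (Pm11 p q mh / Pm10 p q mh) _ (Hshift 2%nat))).
    eapply is_lim_seq_ext; [|exact H]. intros n. simpl.
    unfold y, low_arrival_inflow. rewrite Nat.add_0_r, Nat.add_1_r, Nat.add_succ_r, Nat.add_1_r.
    assert (0 < (INR n + 1) ^ j) by (apply pow_lt; assert (0 <= INR n) by apply pos_INR; lra).
    assert (0 < r ^ n) by (apply pow_lt; lra).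
    simpl. field. repeat split; lra. }
  assert (H := bounded_solution_asymptotics (P10 p q mh) (P00 p q mh) (Pm10 p q mh) r
                 Hc Hr Hchar Hsmall
                 (fun i => pi i (S j)) (fun i => low_arrival_inflow p q mh pi i (S j))
                 (fun i => stationary_abs_le_1 i (S j))
                 (fun i => stationary_balance_high_pos p q mh ml pi Hst i (S j)) j _ Hinflow).
  replace (K * Cconst p q mh / INR (S j)) with
    ((P11 p q mh / (Pm10 p q mh * r ^ 2) * K + P01 p q mh / (Pm10 p q mh * r) * K
      + Pm11 p q mh / Pm10 p q mh * K) / (P10 p q mh / (Pm10 p q mh * r ^ 2) - 1) / INR (S j));
    [exact H|].
  assert (Hden := Pm10_r0_sq_lt_P10 p q mh Hp Hq Hmh). fold r in Hden.
  rewrite (Cconst_eq p q mh Hp Hq Hmh). fold r.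
  assert (0 < INR (S j)) by (apply lt_0_INR; lia).
  field. repeat split; lra.
Qed.

Lemma stationary_column_asymptotics (j : nat) :
  is_lim_seq (fun n => pi n j / r ^ n / INR n ^ j)
    (Cconst p q mh ^ j * pi O O / INR (Factorial.fact j)).
Proof.
  induction j as [|j IH].
  - eapply is_lim_seq_ext; [|apply is_lim_seq_const]. intros n. cbv beta.
    rewrite (stationary_column_0 n).
    destruct (r0_spec p q mh Hp Hq Hmh) as [Hr _]. fold r in Hr.
    assert (0 < r ^ n) by (apply pow_lt; lra).
    simpl. field. lra.
  - replace (Cconst p q mh ^ S j * pi O O / INR (Factorial.fact (S j)))
      with (Cconst p q mh ^ j * pi O O / INR (Factorial.fact j) * Cconst p q mh / INR (S j)).
    + apply stationary_column_succ, IH.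
    + assert (0 < INR (Factorial.fact j)) by apply lt_0_INR, Factorial.lt_O_fact.
      assert (0 < INR (S j)) by (apply lt_0_INR; lia).
      change (Factorial.fact (S j)) with (S j * Factorial.fact j)%nat.
      rewrite mult_INR. simpl pow. field. lra.
Qed.

End Columns.

Theorem theorem6p1 (p q mh ml : R) (pi : nat -> nat -> R) :
  0 < p < 1 -> 0 < q < 1 -> 0 < mh < 1 -> 0 < ml < 1 ->
  p + q + mh + ml = 1 -> ml <= mh ->
  p / mh + q / ml < 1 ->
  stationary p q mh ml pi ->
  forall j : nat,
    is_lim_seq
      (fun i : nat =>
         pi i j /
         (Cconst p q mh ^ j * pi 0%nat 0%nat / INR (Factorial.fact j)
          * INR i ^ j * r0 p q mh ^ i))
      1.
Proof.
  (* The normalisation and load conditions only ensure that a stationary distribution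
     exists. *)
  intros Hp Hq Hmh Hml _ _ _ Hst j.
  set (K := Cconst p q mh ^ j * pi O O / INR (Factorial.fact j)).
  assert (HK : 0 < K).
  { assert (0 < INR (Factorial.fact j)) by apply lt_0_INR, Factorial.lt_O_fact.
    assert (0 < Cconst p q mh ^ j) by (apply pow_lt, Cconst_pos; assumption).
    assert (0 < pi O O) by (apply (stationary_empty_pos p q mh ml); assumption).
    unfold K. apply Rdiv_lt_0_compat; [apply Rmult_lt_0_compat|]; assumption. }
  destruct (r0_spec p q mh Hp Hq Hmh) as [Hr _].
  assert (H := is_lim_seq_scal_r _ (/ K) _
                 (stationary_column_asymptotics p q mh ml pi Hp Hq Hmh Hst j)).
  simpl in H. rewrite Rinv_r in H by lra.
  eapply is_lim_seq_ext_loc; [|exact H]. exists 1%nat. intros n Hn.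
  assert (0 < INR n ^ j) by (apply pow_lt, lt_0_INR; lia).
  assert (0 < r0 p q mh ^ n) by (apply pow_lt; lra).
  field. repeat split; lra.
Qed.
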